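(* (Provability logic.) For every proposition $A$: (GL) $\Box(\Box A\supset A)\supset\Box A$ holds under both $\vdash^H_{\mathbf{CPL}}$ and $\vdash^H_{\mathbf{CPL*}}$ when only transitive accessibility relations are considered. (Löb) $\vdash^H_{\mathbf{CPL}}\Box A\supset A$ implies $\vdash^H_{\mathbf{CPL}}A$, and $\vdash^H_{\mathbf{CPL*}}\Box A\supset A$ implies $\vdash^H_{\mathbf{CPL*}}A$.
   Context: A set $W$ of worlds with a binary accessibility relation $\prec$ is converse well-founded if there is no infinite chain $w_0\prec w_1\prec\cdots$; $\prec^*$ denotes its reflexive–transitive closure. Propositions: $A,B,C ::= Q\mid\bot\mid A\supset B\mid\Diamond A\mid\Box A$ ($Q$ atomic). A context $\Gamma$ is a finite collection of judgments $A[w]$. Given such $(W,\prec)$, $\Gamma\vdash_{\mathbf{CPL}}A[w]$ is defined one world at a time (provability at $w$ after provability at all worlds reachable from $w$ by one or more $\prec$-steps) as the least relation closed under: (hyp) $\Gamma,A[w]\vdash A[w]$; ($\bot E$) $\Gamma\vdash\bot[w]$ implies $\Gamma\vdash C[w]$; ($\supset I$) $\Gamma,A[w]\vdash B[w]$ implies $\Gamma\vdash A\supset B[w]$; ($\supset E$) $\Gamma\vdash A\supset B[w]$ and $\Gamma\vdash A[w]$ imply $\Gamma\vdash B[w]$; ($\Diamond I$) $w\prec w'$ and $\Gamma\vdash A[w']$ imply $\Gamma\vdash\Diamond A[w]$; ($\Box I$) if $\Gamma\vdash A[w']$ for all $w'$ with $w\prec w'$ then $\Gamma\vdash\Box A[w]$;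 ($\Diamond E$) if $\Gamma\vdash\Diamond A[w]$ and for all $w'$ with $w\prec w'$, $\Gamma\vdash A[w']$ implies $\Gamma\vdash C[w]$, then $\Gamma\vdash C[w]$; ($\Box E$) if $\Gamma\vdash\Box A[w]$ and ($\Gamma\vdash A[w']$ for all $w'$ with $w\prec w'$) implies $\Gamma\vdash C[w]$, then $\Gamma\vdash C[w]$. $\Gamma\vdash_{\mathbf{CPL*}}A[w]$ is defined identically except that: ($\bot E$) $w'\prec^* w$ and $\Gamma\vdash\bot[w]$ imply $\Gamma\vdash C[w']$; ($\Diamond E$) if $w''\prec^* w$, $\Gamma\vdash\Diamond A[w]$, and for all $w'$ with $w\prec w'$, $\Gamma\vdash A[w']$ implies $\Gamma\vdash C[w'']$, then $\Gamma\vdash C[w'']$; ($\Box E$) if $w''\prec^* w$, $\Gamma\vdash\Box A[w]$, and ($\Gamma\vdash A[w']$ for all $w'$ with $w\prec w'$) implies $\Gamma\vdash C[w'']$, then $\Gamma\vdash C[w'']$. $\vdash^H_{\mathbf{CPL}}A$ means: for every converse well-founded $(W,\prec)$, every $w\in W$ and every context $\Gamma$, $\Gamma\vdash_{\mathbf{CPL}}A[w]$; likewise $\vdash^H_{\mathbf{CPL*}}A$ with $\vdash_{\mathbf{CPL*}}$. ''Holds when only transitive accessibility relations are considered'' means the same quantification restricted to transitive $\prec$. *)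

From Stdlib Require Import List Relations Classical ClassicalEpsilon
  Wellfounded.Transitive_Closure.
Import ListNotations.
Set Implicit Arguments.

Inductive form : Type :=
| Atom : nat -> form
| Bot : form
| Imp : form -> form -> form
| Dia : form -> form
| Box : form -> form.

(* A context: a finite collection of judgments A[w]. *)
Definition ctx (W : Type) := list (form * W).

Definition conv_wf (W : Type) (R : W -> W -> Prop) : Prop :=
  ~ exists f : nat -> W, forall n, R (f n) (f (S n)).

Lemma conv_wf_wf (W : Type) (R : W -> W -> Prop) :
  conv_wf R -> well_founded (fun x y => R y x).
Proof.
  intros H x. apply NNPP. intro Hx.
  assert (step : forall z : {z : W | ~ Acc (fun x y => R y x) z},
             {y : {y : W | ~ Acc (fun x y => R y x) y} | R (proj1_sig z) (proj1_sig y)}).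
  { intros [z Hz]. apply constructive_indefinite_description.
    apply NNPP. intro Hn. apply Hz. constructor. intros y Hy.
    apply NNPP. intro Hy'. apply Hn. exists (exist _ y Hy'). exact Hy. }
  set (g := fix g (n : nat) : {z : W | ~ Acc (fun x y => R y x) z} :=
              match n with O => exist _ x Hx | S m => proj1_sig (step (g m)) end).
  apply H. exists (fun n => proj1_sig (g n)). intro n. simpl.
  exact (proj2_sig (step (g n))).
Qed.

Section Rules.
Variables (W : Type) (R : W -> W -> Prop).

(* Rules of CPL at world w; [P u G A] stands for the (already defined)
   provability G |- A[u] at a successor world u. *)
Inductive cpl_step (P : W -> ctx W -> form -> Prop) (w : W) : ctx W -> form -> Prop :=
| cpl_hyp G A : In (A, w) G -> cpl_step P w G A
| cpl_botE G C : cpl_step P w G Bot -> cpl_step P w G C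
| cpl_impI G A B : cpl_step P w ((A, w) :: G) B -> cpl_step P w G (Imp A B)
| cpl_impE G A B : cpl_step P w G (Imp A B) -> cpl_step P w G A -> cpl_step P w G B
| cpl_diaI G A w' : R w w' -> P w' G A -> cpl_step P w G (Dia A)
| cpl_boxI G A : (forall w', R w w' -> P w' G A) -> cpl_step P w G (Box A)
| cpl_diaE G A C : cpl_step P w G (Dia A) ->
    (forall w', R w w' -> P w' G A -> cpl_step P w G C) -> cpl_step P w G C
| cpl_boxE G A C : cpl_step P w G (Box A) ->
    ((forall w', R w w' -> P w' G A) -> cpl_step P w G C) -> cpl_step P w G C.

(* Rules of CPL* at world v; [P u G A] stands for G |- A[u] at a world u
   strictly reachable from v (v R+ u).  A premise at a world w with v R* w
   is split into the two cases w = v and v R+ w. *)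
Inductive cpls_step (P : W -> ctx W -> form -> Prop) (v : W) : ctx W -> form -> Prop :=
| cpls_hyp G A : In (A, v) G -> cpls_step P v G A
| cpls_botE_refl G C : cpls_step P v G Bot -> cpls_step P v G C
| cpls_botE_trans G C w : clos_trans W R v w -> P w G Bot -> cpls_step P v G C
| cpls_impI G A B : cpls_step P v ((A, v) :: G) B -> cpls_step P v G (Imp A B)
| cpls_impE G A B : cpls_step P v G (Imp A B) -> cpls_step P v G A -> cpls_step P v G B
| cpls_diaI G A w' : R v w' -> P w' G A -> cpls_step P v G (Dia A)
| cpls_boxI G A : (forall w', R v w' -> P w' G A) -> cpls_step P v G (Box A)
| cpls_diaE_refl G A C : cpls_step P v G (Dia A) ->
    (forall w', R v w' -> P w' G A -> cpls_step P v G C) -> cpls_step P v G C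
| cpls_diaE_trans G A C w : clos_trans W R v w -> P w G (Dia A) ->
    (forall w', R w w' -> P w' G A -> cpls_step P v G C) -> cpls_step P v G C
| cpls_boxE_refl G A C : cpls_step P v G (Box A) ->
    ((forall w', R v w' -> P w' G A) -> cpls_step P v G C) -> cpls_step P v G C
| cpls_boxE_trans G A C w : clos_trans W R v w -> P w G (Box A) ->
    ((forall w', R w w' -> P w' G A) -> cpls_step P v G C) -> cpls_step P v G C.

End Rules.

Definition derivCPL (W : Type) (R : W -> W -> Prop) (H : conv_wf R)
  : W -> ctx W -> form -> Prop :=
  Fix (conv_wf_wf H) (fun _ => ctx W -> form -> Prop)
    (fun w rec => cpl_step R (fun u G A => exists h : R w u, rec u h G A) w).

Definition derivCPLs (W : Type) (R : W -> W -> Prop) (H : conv_wf R)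
  : W -> ctx W -> form -> Prop :=
  Fix (wf_clos_trans W (fun x y => R y x) (conv_wf_wf H))
    (fun _ => ctx W -> form -> Prop)
    (fun v rec => cpls_step R
       (fun u G A => exists h : clos_trans W (fun x y => R y x) u v, rec u h G A) v).

Definition provH_CPL (A : form) : Prop :=
  forall (W : Type) (R : W -> W -> Prop) (H : conv_wf R) (w : W) (G : ctx W),
    derivCPL H w G A.
Definition provH_CPLs (A : form) : Prop :=
  forall (W : Type) (R : W -> W -> Prop) (H : conv_wf R) (w : W) (G : ctx W),
    derivCPLs H w G A.

Definition provH_CPL_trans (A : form) : Prop :=
  forall (W : Type) (R : W -> W -> Prop) (H : conv_wf R), transitive W R ->
    forall (w : W) (G : ctx W), derivCPL H w G A.
Definition provH_CPLs_trans (A : form) : Prop :=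
  forall (W : Type) (R : W -> W -> Prop) (H : conv_wf R), transitive W R ->
    forall (w : W) (G : ctx W), derivCPLs H w G A.

Definition GL (A : form) : form := Imp (Box (Imp (Box A) A)) (Box A).

(** Both halves are Löb's argument run along the converse well-founded
    accessibility relation.  If [Box A -> A] is derivable at every world of a
    region closed under successors, then induction on the converse of [R]
    gives [A] at every world of the region: at [u], the induction hypothesis
    yields [A] at all successors, hence [Box A] at [u], and modus ponens gives
    [A].  For (Löb) the region is all of [W]; for (GL) it is the set of
    successors of the current world, where [Box A -> A] holds by the box
    hypothesis and which is closed under successors since [R] is transitive. *)

From Stdlib Require Import Relations FunctionalExtensionality.

Section Derivability.
Variables (W : Type) (R : W -> W -> Prop) (H : conv_wf R).

Lemma derivCPL_unfold (w : W) :
  derivCPL H w = cpl_step R (fun u G A => exists h : R w u, derivCPL H u G A) w.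
Proof.
  unfold derivCPL; rewrite Fix_eq; [reflexivity|].
  intros x f g Hfg.
  replace g with f; [reflexivity|].
  do 2 (apply functional_extensionality_dep; intro); apply Hfg.
Qed.

Lemma derivCPLs_unfold (w : W) :
  derivCPLs H w = cpls_step R
    (fun u G A => exists h : clos_trans W (fun x y => R y x) u w, derivCPLs H u G A) w.
Proof.
  unfold derivCPLs; rewrite Fix_eq; [reflexivity|].
  intros x f g Hfg.
  replace g with f; [reflexivity|].
  do 2 (apply functional_extensionality_dep; intro); apply Hfg.
Qed.

Lemma derivCPL_boxI (w : W) (G : ctx W) (A : form) :
  (forall u, R w u -> derivCPL H u G A) -> derivCPL H w G (Box A).
Proof.
  intro HA; rewrite derivCPL_unfold.
  apply cpl_boxI; intros u Hu; exists Hu; exact (HA u Hu).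
Qed.

Lemma derivCPLs_boxI (w : W) (G : ctx W) (A : form) :
  (forall u, R w u -> derivCPLs H u G A) -> derivCPLs H w G (Box A).
Proof.
  intro HA; rewrite derivCPLs_unfold.
  apply cpls_boxI; intros u Hu.
  exists (t_step W (fun x y => R y x) _ _ Hu); exact (HA u Hu).
Qed.

Lemma derivCPL_impE (w : W) (G : ctx W) (A B : form) :
  derivCPL H w G (Imp A B) -> derivCPL H w G A -> derivCPL H w G B.
Proof. rewrite !derivCPL_unfold; apply cpl_impE. Qed.

Lemma derivCPLs_impE (w : W) (G : ctx W) (A B : form) :
  derivCPLs H w G (Imp A B) -> derivCPLs H w G A -> derivCPLs H w G B.
Proof. rewrite !derivCPLs_unfold; apply cpls_impE. Qed.

Section LoebRegion.
Variables (S : W -> Prop) (G : ctx W) (A : form).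
Hypothesis S_succ_closed : forall u v, S u -> R u v -> S v.

Lemma derivCPL_loeb_on :
  (forall u, S u -> derivCPL H u G (Imp (Box A) A)) ->
  forall u, S u -> derivCPL H u G A.
Proof.
  intros Hloeb u.
  induction u as [u IH] using (well_founded_ind (conv_wf_wf H)); intro Su.
  apply derivCPL_impE with (1 := Hloeb u Su), derivCPL_boxI.
  intros v Hv; exact (IH v Hv (S_succ_closed u v Su Hv)).
Qed.

Lemma derivCPLs_loeb_on :
  (forall u, S u -> derivCPLs H u G (Imp (Box A) A)) ->
  forall u, S u -> derivCPLs H u G A.
Proof.
  intros Hloeb u.
  induction u as [u IH] using (well_founded_ind (conv_wf_wf H)); intro Su.
  apply derivCPLs_impE with (1 := Hloeb u Su), derivCPLs_boxI.
  intros v Hv; exact (IH v Hv (S_succ_closed u v Su Hv)).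
Qed.

End LoebRegion.

Hypothesis R_trans : transitive W R.

Lemma derivCPL_GL (w : W) (G : ctx W) (A : form) : derivCPL H w G (GL A).
Proof.
  rewrite derivCPL_unfold; apply cpl_impI.
  apply cpl_boxE with (A := Imp (Box A) A); [apply cpl_hyp; now left|].
  intro Hbox; rewrite <- derivCPL_unfold; apply derivCPL_boxI.
  apply derivCPL_loeb_on; [exact (R_trans w)|].
  intros u Hu; destruct (Hbox u Hu) as [_ HA]; exact HA.
Qed.

Lemma derivCPLs_GL (w : W) (G : ctx W) (A : form) : derivCPLs H w G (GL A).
Proof.
  rewrite derivCPLs_unfold; apply cpls_impI.
  apply cpls_boxE_refl with (A := Imp (Box A) A); [apply cpls_hyp; now left|].
  intro Hbox; rewrite <- derivCPLs_unfold; apply derivCPLs_boxI.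
  apply derivCPLs_loeb_on; [exact (R_trans w)|].
  intros u Hu; destruct (Hbox u Hu) as [_ HA]; exact HA.
Qed.

End Derivability.

Theorem theorem7 (A : form) :
  (provH_CPL_trans (GL A) /\ provH_CPLs_trans (GL A)) /\
  ((provH_CPL (Imp (Box A) A) -> provH_CPL A) /\
   (provH_CPLs (Imp (Box A) A) -> provH_CPLs A)).
Proof.
  split; split.
  - intros W R H Htr w G; now apply derivCPL_GL.
  - intros W R H Htr w G; now apply derivCPLs_GL.
  - intros Hloeb W R H w G.
    apply derivCPL_loeb_on with (S := fun _ => True); auto.
  - intros Hloeb W R H w G.
    apply derivCPLs_loeb_on with (S := fun _ => True); auto.
Qed.
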